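(* Let $\mathbf z\in\mathbb{R}^{\rho(n_u+n_y)}$ be fixed, $\varphi:\mathbb{R}^{\rho(n_u+n_y)}\times\mathbb{R}^{n_uT}\to\mathbb{R}^{n_\varphi}$ a regression map, $Y\in\mathbb{R}^{n_yT\times N}$, $\Phi\in\mathbb{R}^{n_\varphi\times N}$ training data matrices, $\widehat\Theta\in\mathbb{R}^{n_yT\times n_\varphi}$, and define $\Sigma_\Delta=\frac1N(Y-\widehat\Theta\Phi)(Y-\widehat\Theta\Phi)^\top$ and $\Sigma_\varphi=\frac1N\Phi\Phi^\top$. Let $Q\in\mathbb{R}^{n_yT\times n_yT}$ and $R\in\mathbb{R}^{n_uT\times n_uT}$ be positive definite, $\bar{\mathbf y}\in\mathbb{R}^{n_yT}$, $\bar{\mathbf u}\in\mathbb{R}^{n_uT}$ references, $J(\mathbf u,\hat{\mathbf y})=\|\hat{\mathbf y}-\bar{\mathbf y}\|_Q^2+\|\mathbf u-\bar{\mathbf u}\|_R^2$, and $\lambda_1,\lambda_2\ge0$. Assume $\Sigma_\Delta$ and $\Sigma_\varphi$ are positive definite. Consider the unconstrained problem $$\min_{\mathbf u,\,\Delta\hat{\mathbf y}}\; J(\mathbf u,\hat{\mathbf y})+\frac{\lambda_1}{N}\|\varphi(\mathbf z,\mathbf u)\|^2_{\Sigma_\varphi^{-1}}+\frac{\lambda_2}{N}\|\Delta\hat{\mathbf y}\|^2_{\Sigma_\Delta^{-1}}\quad\text{s.t.}\quad \hat{\mathbf y}=\widehat\Theta\varphi(\mathbf z,\mathbf u)+\Delta\hat{\mathbf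 y}.$$ Then this problem gives the same optimal $\mathbf u$ as $$\min_{\mathbf u}\; \|\bar{\mathbf y}-\widehat\Theta\varphi(\mathbf z,\mathbf u)\|^2_{\widetilde Q}+\|\bar{\mathbf u}-\mathbf u\|_R^2+\frac{\lambda_1}{N}\|\varphi(\mathbf z,\mathbf u)\|^2_{\Sigma_\varphi^{-1}},$$ where $\widetilde Q=Q-Q\big(Q+\frac{\lambda_2}{N}\Sigma_\Delta^{-1}\big)^{-1}Q\preceq Q$.
   Context: For a vector $x$ and symmetric matrix $W$, $\|x\|_W^2=x^\top Wx$. $A\preceq B$ means $B-A$ is positive semidefinite. *)

From HB Require Import structures.
From mathcomp Require Import all_boot all_order all_algebra.
Set Implicit Arguments. Unset Strict Implicit. Unset Printing Implicit Defensive.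
Import Order.TTheory GRing.Theory Num.Theory.
Local Open Scope ring_scope.

Definition wnorm2 {R : realFieldType} {n : nat} (W : 'M[R]_n) (x : 'cV[R]_n) : R :=
  (x^T *m W *m x) 0 0.

Definition posdef {R : realFieldType} {n : nat} (A : 'M[R]_n) : Prop :=
  A^T = A /\ forall x : 'cV[R]_n, x != 0 -> 0 < wnorm2 A x.

Definition possemidef {R : realFieldType} {n : nat} (A : 'M[R]_n) : Prop :=
  A^T = A /\ forall x : 'cV[R]_n, 0 <= wnorm2 A x.

Definition loewner_le {R : realFieldType} {n : nat} (A B : 'M[R]_n) : Prop :=
  possemidef (B - A).

Definition SigmaDelta {R : realFieldType} {m p N : nat}
  (Y : 'M[R]_(m, N)) (Theta : 'M[R]_(m, p)) (Phi : 'M[R]_(p, N)) : 'M[R]_m :=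
  (N%:R)^-1 *: ((Y - Theta *m Phi) *m (Y - Theta *m Phi)^T).

Definition SigmaPhi {R : realFieldType} {p N : nat} (Phi : 'M[R]_(p, N)) : 'M[R]_p :=
  (N%:R)^-1 *: (Phi *m Phi^T).

(* Eliminating the slack [dy] is a completion of the square: with
   [M = Q + lam2/N Sigma_Delta^-1] and [a = Theta phi(z,u) - ybar],
   [|a + dy|_Q^2 + lam2/N |dy|_(Sigma_Delta^-1)^2 = |a|_Qt^2 + |dy + M^-1 Q a|_M^2].
   Since [M] is positive definite, the second term is nonnegative and vanishes at
   [dy = - M^-1 Q a], so the joint objective minimized over [dy] is exactly the
   reduced one, and [Q - Qt = Q M^-1 Q] is positive semidefinite. *)
From HB Require Import structures.
From mathcomp Require Import all_boot all_order all_algebra.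
From mathcomp Require Import ring lra.
Set Implicit Arguments. Unset Strict Implicit. Unset Printing Implicit Defensive.
Import Order.TTheory GRing.Theory Num.Theory.
Local Open Scope ring_scope.

Section QuadraticForms.
Variable R : realFieldType.

Definition bilform {n : nat} (W : 'M[R]_n) (x y : 'cV[R]_n) : R := (x^T *m W *m y) 0 0.

Lemma wnorm2Dl n (A B : 'M[R]_n) x : wnorm2 (A + B) x = wnorm2 A x + wnorm2 B x.
Proof. by rewrite /wnorm2 mulmxDr mulmxDl mxE. Qed.

Lemma wnorm2Nl n (A : 'M[R]_n) x : wnorm2 (- A) x = - wnorm2 A x.
Proof. by rewrite /wnorm2 mulmxN mulNmx mxE. Qed.

Lemma wnorm2Zl n c (A : 'M[R]_n) x : wnorm2 (c *: A) x = c * wnorm2 A x.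
Proof. by rewrite /wnorm2 -scalemxAr -scalemxAl mxE. Qed.

Lemma wnorm2Dr n (W : 'M[R]_n) x y :
  wnorm2 W (x + y) = wnorm2 W x + bilform W x y + bilform W y x + wnorm2 W y.
Proof. by rewrite /wnorm2 /bilform [(x + y)^T]linearD /= !mulmxDl !mulmxDr !mxE; ring. Qed.

Lemma wnorm2Nr n (W : 'M[R]_n) x : wnorm2 W (- x) = wnorm2 W x.
Proof. by rewrite /wnorm2 [(- x)^T]linearN /= mulNmx mulmxN mulNmx opprK. Qed.

Lemma wnorm20 n (W : 'M[R]_n) : wnorm2 W 0 = 0.
Proof. by rewrite /wnorm2 mulmx0 mxE. Qed.

Lemma wnorm2_congr m n (W : 'M[R]_m) (B : 'M[R]_(m, n)) x :
  wnorm2 (B^T *m W *m B) x = wnorm2 W (B *m x).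
Proof. by rewrite /wnorm2 trmx_mul !mulmxA. Qed.

Lemma posdef_unitmx n (A : 'M[R]_n) : posdef A -> A \in unitmx.
Proof.
move=> [AT Apos]; rewrite unitmxE unitfE; apply/negP => /det0P [v v0 vA].
have Av : A *m v^T = 0 by rewrite -AT -trmx_mul vA trmx0.
have := Apos v^T; rewrite trmx_eq0 => /(_ v0).
by rewrite /wnorm2 -mulmxA Av mulmx0 mxE ltxx.
Qed.

Lemma posdef_possemidef n (A : 'M[R]_n) : posdef A -> possemidef A.
Proof.
move=> [AT Apos]; split=> // x.
by have [->|/Apos/ltW //] := eqVneq x 0; rewrite wnorm20.
Qed.

Lemma posdefDr n (A B : 'M[R]_n) : posdef A -> possemidef B -> posdef (A + B).
Proof.
move=> [AT Apos] [BT Bge0]; split; first by rewrite linearD /= AT BT.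
by move=> x /Apos Ax; rewrite wnorm2Dl ltr_wpDr.
Qed.

Lemma possemidefZ n c (A : 'M[R]_n) : 0 <= c -> possemidef A -> possemidef (c *: A).
Proof.
move=> c0 [AT Age0]; split; first by rewrite linearZ /= AT.
by move=> x; rewrite wnorm2Zl mulr_ge0.
Qed.

Lemma possemidef_congr m n (A : 'M[R]_m) (B : 'M[R]_(m, n)) :
  possemidef A -> possemidef (B^T *m A *m B).
Proof.
move=> [AT Age0]; split=> [|x]; last by rewrite wnorm2_congr.
by rewrite !trmx_mul trmxK AT mulmxA.
Qed.

Lemma posdef_invmx n (A : 'M[R]_n) : posdef A -> posdef (invmx A).
Proof.
move=> Apd; have [AT Apos] := Apd; have Au := posdef_unitmx Apd.
have AiT : (invmx A)^T = invmx A by rewrite trmx_inv AT.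
split=> // x x0.
have -> : invmx A = (invmx A)^T *m A *m invmx A by rewrite AiT mulVmx ?mul1mx.
rewrite wnorm2_congr; apply: Apos.
by apply: contra_neq x0 => Aix0; rewrite -(mulKVmx Au x) Aix0 mulmx0.
Qed.

Lemma wnorm2_complete_square n (Q P : 'M[R]_n) a d :
  Q^T = Q -> P^T = P -> Q + P \in unitmx ->
  wnorm2 Q (a + d) + wnorm2 P d =
  wnorm2 (Q - Q *m invmx (Q + P) *m Q) a
  + wnorm2 (Q + P) (d + invmx (Q + P) *m Q *m a).
Proof.
move=> QT PT Mu; set M := Q + P; set b := invmx M *m Q *m a.
have MiT : (invmx M)^T = invmx M by rewrite trmx_inv linearD /= QT PT.
have Mdb : bilform M d b = bilform Q d a.
  by rewrite /bilform /b !mulmxA mulmxK.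
have Mbd : bilform M b d = bilform Q a d.
  by rewrite /bilform /b !trmx_mul MiT QT !mulmxA mulmxKV.
have Mb : wnorm2 M b = wnorm2 (Q *m invmx M *m Q) a.
  by rewrite /wnorm2 /b !trmx_mul MiT QT !mulmxA mulmxKV.
rewrite wnorm2Dr [wnorm2 M _]wnorm2Dr Mdb Mbd Mb !wnorm2Dl wnorm2Nl; ring.
Qed.

End QuadraticForms.

Lemma argmin_joint_iff_profile disp (T : porderType disp) (U D : Type)
    (f : U -> D -> T) (g : U -> T) (dmin : U -> D) :
  (forall u d, (g u <= f u d)%O) -> (forall u, f u (dmin u) = g u) ->
  forall u, (exists d, forall u' d', (f u d <= f u' d')%O) <-> (forall u', (g u <= g u')%O).
Proof.
move=> g_le_f f_dmin u; split=> [[d f_min] u' | g_min].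
  by apply: le_trans (g_le_f u d) _; rewrite -f_dmin.
by exists (dmin u) => u' d'; rewrite f_dmin; apply: le_trans (g_min u') _.
Qed.

Theorem corollary1 (R : realFieldType) (rho nu ny T nphi N : nat)
  (z : 'cV[R]_(rho * (nu + ny)))
  (phi : 'cV[R]_(rho * (nu + ny)) -> 'cV[R]_(nu * T) -> 'cV[R]_nphi)
  (Y : 'M[R]_(ny * T, N)) (Phi : 'M[R]_(nphi, N)) (Theta : 'M[R]_(ny * T, nphi))
  (Q : 'M[R]_(ny * T)) (Rw : 'M[R]_(nu * T))
  (ybar : 'cV[R]_(ny * T)) (ubar : 'cV[R]_(nu * T)) (lam1 lam2 : R) :
  (0 < N)%N ->
  posdef Q -> posdef Rw -> 0 <= lam1 -> 0 <= lam2 ->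
  posdef (SigmaDelta Y Theta Phi) -> posdef (SigmaPhi Phi) ->
  let J := fun (u : 'cV[R]_(nu * T)) (yh : 'cV[R]_(ny * T)) =>
             wnorm2 Q (yh - ybar) + wnorm2 Rw (u - ubar) in
  let F1 := fun (u : 'cV[R]_(nu * T)) (dy : 'cV[R]_(ny * T)) =>
             J u (Theta *m phi z u + dy)
             + lam1 / N%:R * wnorm2 (invmx (SigmaPhi Phi)) (phi z u)
             + lam2 / N%:R * wnorm2 (invmx (SigmaDelta Y Theta Phi)) dy in
  let Qt := Q - Q *m invmx (Q + (lam2 / N%:R) *: invmx (SigmaDelta Y Theta Phi)) *m Q in
  let F2 := fun (u : 'cV[R]_(nu * T)) =>
             wnorm2 Qt (ybar - Theta *m phi z u) + wnorm2 Rw (ubar - u)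
             + lam1 / N%:R * wnorm2 (invmx (SigmaPhi Phi)) (phi z u) in
  (forall u : 'cV[R]_(nu * T),
     (exists dy : 'cV[R]_(ny * T),
        forall (u' : 'cV[R]_(nu * T)) (dy' : 'cV[R]_(ny * T)), F1 u dy <= F1 u' dy')
     <-> (forall u' : 'cV[R]_(nu * T), F2 u <= F2 u'))
  /\ loewner_le Qt Q.
Proof.
move=> _ Q_pd _ _ lam2_ge0 SigmaD_pd _ J F1 Qt F2.
pose P := (lam2 / N%:R) *: invmx (SigmaDelta Y Theta Phi); pose M := Q + P.
have P_psd : possemidef P.
  apply/possemidefZ/posdef_possemidef/posdef_invmx => //.
  by rewrite divr_ge0 ?ler0n.
have M_pd : posdef M by apply: posdefDr.
pose a u := Theta *m phi z u - ybar.
pose dmin u := - (invmx M *m Q *m a u).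
have F1E u dy : F1 u dy = F2 u + wnorm2 M (dy - dmin u).
  have := wnorm2_complete_square (a u) dy Q_pd.1 P_psd.1 (posdef_unitmx M_pd).
  rewrite /P wnorm2Zl -/P -/M -/Qt => square.
  rewrite /F1 /J /F2 /dmin opprK -(opprB u) -(opprB (Theta *m _)) !wnorm2Nr.
  have -> : Theta *m phi z u + dy - ybar = a u + dy by rewrite addrAC.
  lra.
split.
  apply: (argmin_joint_iff_profile (f := F1) (dmin := dmin)) => [u dy|u].
    by rewrite F1E lerDl; case: (posdef_possemidef M_pd) => _.
  by rewrite F1E subrr wnorm20 addr0.
rewrite /loewner_le /Qt opprB addrC subrK -{1}Q_pd.1.
exact/possemidef_congr/posdef_possemidef/posdef_invmx.
Qed.
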